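(* Let $\mathcal{V}$ be an entropic Jónsson–Tarski variety and $\mathcal{V}_\mathsf{Ab}$ its abelian core. Then: (1) $\mathcal{V}_\mathsf{Ab}$ is a full, isomorphism-closed, reflective subcategory of $\mathcal{V}$. (2) The assignment $A\mapsto Inv(A)$ defines a functor $Inv\colon\mathcal{V}\to\mathcal{V}_\mathsf{Ab}$ which is right adjoint to the embedding $\mathcal{V}_\mathsf{Ab}\hookrightarrow\mathcal{V}$; moreover, the composite $\mathcal{V}_\mathsf{Ab}\hookrightarrow\mathcal{V}\xrightarrow{Inv}\mathcal{V}_\mathsf{Ab}$ is the identity. (3) $\mathcal{V}_\mathsf{Ab}$ is closed under the entropic tensor product $-\otimes_\mathcal{V}-$ of $\mathcal{V}$; consequently the entropic monoidal structure of $\mathcal{V}_\mathsf{Ab}$ is given by $-\otimes_\mathcal{V}-$ with unit object the reflection $RF1$ of $F1$ into $\mathcal{V}_\mathsf{Ab}$. (4) The embedding $\mathcal{V}_\mathsf{Ab}\hookrightarrow\mathcal{V}$ is a symmetric monoidal functor.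
   Context: A variety is a finitary one-sorted variety of algebras. It is entropic if its algebraic theory is commutative (every operation is a homomorphism); then it is symmetric monoidal closed under the entropic tensor product $A\otimes_\mathcal{V} B$, characterized by a universal bimorphism $A\times B\to A\otimes_\mathcal{V}B$ (every map $A\times B\to C$ homomorphic in each variable factors uniquely through it via a homomorphism), with unit the free algebra $F1$ on one generator and internal hom $[A,B]$ the subalgebra of $B^A$ consisting of homomorphisms. A Jónsson–Tarski variety has a nullary operation $0$ and binary operation $+$ with $x+0=x=0+x$. An element $x$ of a $\mathcal{V}$-algebra $A$ is invertible if there is $y$ with $x+y=0=y+x$ (written $y=-x$); $Inv(A)$ is the set of invertible elements, which is a subalgebra of $A$. The abelian core $\mathcal{V}_\mathsf{Ab}$ is the full subcategory of $\mathcal{V}$ spanned by the algebras $A$ with $Inv(A)=A$; it is itself an entropic Jónsson–Tarski variety (equivalently, the category of internal groups in $\mathcal{V}$), and its entropic tensor product is the one defined intrinsically in $\mathcal{V}_\mathsf{Ab}$. *)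

From mathcomp Require Import all_boot.

Set Implicit Arguments.
Unset Strict Implicit.
Unset Printing Implicit Defensive.

Record signature := Signature {
  op_sym : Type;
  arity : op_sym -> nat
}.

Record algebra (S : signature) := Algebra {
  carrier :> Type;
  interp : forall o : op_sym S, ('I_(arity o) -> carrier) -> carrier
}.
Arguments interp {S} A o args : rename.

Inductive term (S : signature) (X : Type) : Type :=
  | Var : X -> term S X
  | App : forall o : op_sym S, ('I_(arity o) -> term S X) -> term S X.
Arguments Var {S X} x.
Arguments App {S X} o args.

Fixpoint eval (S : signature) (X : Type) (A : algebra S) (v : X -> A)
    (t : term S X) : A :=
  match t with
  | Var x => v x
  | App o args => interp A o (fun i => eval v (args i))
  end.
Arguments eval {S X A} v t.

Record variety := Variety {
  vsig : signature;
  eqns : term vsig nat -> term vsig nat -> Prop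
}.

Section Defs.
Variable V : variety.
Notation S := (vsig V).
Notation alg := (algebra S).

Definition inV (A : alg) : Prop :=
  forall s t, eqns s t -> forall v : nat -> A, eval v s = eval v t.

Definition is_hom (A B : alg) (f : A -> B) : Prop :=
  forall (o : op_sym S) (args : 'I_(arity o) -> A),
    f (interp A o args) = interp B o (fun i => f (args i)).

(* Entropic = the algebraic theory is commutative: in every V-algebra every
   basic operation commutes with every other one (equivalently, every
   operation is a homomorphism A^n -> A). *)
Definition entropic : Prop :=
  forall A : alg, inV A ->
  forall (o o' : op_sym S) (x : 'I_(arity o) -> 'I_(arity o') -> A),
    interp A o (fun i => interp A o' (fun j => x i j)) =
    interp A o' (fun j => interp A o (fun i => x i j)).

(* Jonsson-Tarski structure: a nullary (derived) operation 0, given as a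
   closed term, and a binary (derived) operation +, given as a term in the
   two variables true (= x) and false (= y). *)
Variable zero : term S Empty_set.
Variable plus : term S bool.

Definition zeroA (A : alg) : A := eval (fun e : Empty_set => match e with end) zero.
Definition plusA (A : alg) (x y : A) : A :=
  eval (fun b : bool => if b then x else y) plus.

Definition jonsson_tarski : Prop :=
  forall A : alg, inV A ->
  forall x : A, plusA x (zeroA A) = x /\ plusA (zeroA A) x = x.

Definition Inv (A : alg) (x : A) : Prop :=
  exists y : A, plusA x y = zeroA A /\ plusA y x = zeroA A.

Definition abelian (A : alg) : Prop := forall x : A, Inv x.

Definition inVAb (A : alg) : Prop := inV A /\ abelian A.

Definition reflection (A R : alg) (eta : A -> R) : Prop :=
  inVAb R /\ is_hom eta /\
  forall (B : alg) (f : A -> B), inVAb B -> is_hom f ->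
    (exists h : R -> B, is_hom h /\ forall a, h (eta a) = f a) /\
    (forall h1 h2 : R -> B, is_hom h1 -> is_hom h2 ->
       (forall a, h1 (eta a) = f a) -> (forall a, h2 (eta a) = f a) ->
       forall r, h1 r = h2 r).

Definition bimorphism (A B C : alg) (t : A -> B -> C) : Prop :=
  (forall a, is_hom (t a)) /\ (forall b, is_hom (fun a => t a b)).

(* Universal bimorphism relative to a class P of target algebras
   (P = inV : entropic tensor product of V; P = inVAb : that of V_Ab). *)
Definition is_tensor_in (P : alg -> Prop) (A B T : alg) (t : A -> B -> T) : Prop :=
  P T /\ bimorphism t /\
  forall (C : alg) (f : A -> B -> C), P C -> bimorphism f ->
    (exists h : T -> C, is_hom h /\ forall a b, h (t a b) = f a b) /\
    (forall h1 h2 : T -> C, is_hom h1 -> is_hom h2 ->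
       (forall a b, h1 (t a b) = f a b) -> (forall a b, h2 (t a b) = f a b) ->
       forall x, h1 x = h2 x).

Definition is_tensor := is_tensor_in inV.
Definition is_tensorAb := is_tensor_in inVAb.

Definition free_on_one_in (P : alg -> Prop) (F : alg) (g : F) : Prop :=
  P F /\
  forall (B : alg) (b : B), P B ->
    (exists h : F -> B, is_hom h /\ h g = b) /\
    (forall h1 h2 : F -> B, is_hom h1 -> is_hom h2 -> h1 g = b -> h2 g = b ->
       forall x, h1 x = h2 x).

Definition free_on_one := free_on_one_in inV.
Definition free_on_oneAb := free_on_one_in inVAb.

End Defs.

From mathcomp Require Import all_boot.
From Stdlib Require Import FunctionalExtensionality PropExtensionality.
From Stdlib Require Import ProofIrrelevance ClassicalEpsilon.

(* In an entropic variety every basic operation is a homomorphism for every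
   derived operation, in particular for the Jonsson-Tarski [+] and [0]; by the
   Eckmann-Hilton argument [+] is then a commutative monoid structure on every
   algebra of V, and all basic operations are monoid homomorphisms. Hence the
   invertible elements form a subalgebra, and the reflection of A into V_Ab is
   the Grothendieck group of A: the quotient of A x A by the congruence
   (a, b) ~ (c, d) iff a + d + k = c + b + k for some k, which lies in V as a
   quotient of A x A. A V-tensor product T of abelian algebras is abelian,
   because its universal bimorphism lands in the subalgebra Inv(T) and so the
   identity of T factors through Inv(T); the unit and the comparison maps of
   the monoidal embedding come from the universal properties. *)

Lemma proj1_sig_inj (T : Type) (P : T -> Prop) : injective (@proj1_sig T P).
Proof. by move=> x y; apply: eq_sig_hprop => ? ? ?; apply: proof_irrelevance. Qed.

Section Quotient.
Set Implicit Arguments.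
Unset Strict Implicit.
Variables (X : Type) (r : X -> X -> Prop).
Hypothesis r_refl : forall x, r x x.
Hypothesis r_sym : forall x y, r x y -> r y x.
Hypothesis r_trans : forall x y w, r x y -> r y w -> r x w.

(* Classes are represented as predicates, so no structure on [X] is needed. *)
Definition quot := {P : X -> Prop | exists x, P = r x}.
Definition qclass (x : X) : quot := exist _ (r x) (ex_intro _ x erefl).
Definition qrepr (q : quot) : X :=
  proj1_sig (constructive_indefinite_description _ (proj2_sig q)).

Lemma qclass_eq x y : r x y -> qclass x = qclass y.
Proof.
move=> rxy; apply: proj1_sig_inj; apply: functional_extensionality => w.
apply: propositional_extensionality.
by split=> H; [exact: r_trans (r_sym rxy) H | exact: r_trans rxy H].
Qed.

Lemma qreprK q : qclass (qrepr q) = q.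
Proof.
apply: proj1_sig_inj; rewrite /qrepr /=.
by case: (constructive_indefinite_description _ _).
Qed.

Lemma qrepr_rel x : r x (qrepr (qclass x)).
Proof.
have /(congr1 (@proj1_sig _ _)) /= -> := esym (qreprK (qclass x)).
exact: r_refl.
Qed.

Lemma qclass_surj q : exists x, q = qclass x.
Proof. by exists (qrepr q); rewrite qreprK. Qed.

End Quotient.

Section EntropicJonssonTarski.
Set Implicit Arguments.
Unset Strict Implicit.
Variable V : variety.
Local Notation S := (vsig V).
Variables (zero : term S Empty_set) (plus : term S bool).
Local Notation "x \+ y" := (plusA plus x y) (at level 50, left associativity).
Local Notation z := (zeroA zero).
Local Notation Inv := (Inv zero plus).
Local Notation abelian := (abelian zero plus).
Local Notation inVAb := (inVAb zero plus).

Lemma eval_ext X (A : algebra S) (v w : X -> A) t :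
  v =1 w -> eval v t = eval w t.
Proof.
move=> vw; elim: t => [x|o args IH] /=; first exact: vw.
by congr (interp A o); apply: functional_extensionality.
Qed.

Lemma eval_hom X (A B : algebra S) (f : A -> B) (v : X -> A) t :
  is_hom f -> f (eval v t) = eval (f \o v) t.
Proof.
move=> f_hom; elim: t => [x|o args IH] //=; rewrite f_hom.
by congr (interp B o); apply: functional_extensionality.
Qed.

Lemma hom_comp (A B C : algebra S) (f : A -> B) (g : B -> C) :
  is_hom f -> is_hom g -> is_hom (g \o f).
Proof. by move=> f_hom g_hom o args /=; rewrite f_hom g_hom. Qed.

Lemma hom_plusA (A B : algebra S) (f : A -> B) x y :
  is_hom f -> f (x \+ y) = f x \+ f y.
Proof. by move=> f_hom; rewrite /plusA eval_hom //; apply: eval_ext; case. Qed.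

Lemma hom_zeroA (A B : algebra S) (f : A -> B) : is_hom f -> f (z A) = z B.
Proof. by move=> f_hom; rewrite /zeroA eval_hom //; apply: eval_ext; case. Qed.

Definition prodAlg (A B : algebra S) : algebra S :=
  @Algebra S (A * B)%type
    (fun o args => (interp A o (fst \o args), interp B o (snd \o args))).

Lemma fst_hom (A B : algebra S) : is_hom (fun x : prodAlg A B => x.1).
Proof. by []. Qed.

Lemma snd_hom (A B : algebra S) : is_hom (fun x : prodAlg A B => x.2).
Proof. by []. Qed.

Lemma prod_plusA (A B : algebra S) (x y : prodAlg A B) :
  x \+ y = (x.1 \+ y.1, x.2 \+ y.2).
Proof.
rewrite -(hom_plusA _ _ (@fst_hom A B)) -(hom_plusA _ _ (@snd_hom A B)).
by case: (x \+ y).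
Qed.

Lemma prod_zeroA (A B : algebra S) : z (prodAlg A B) = (z A, z B).
Proof.
rewrite -(hom_zeroA (@fst_hom A B)) -(hom_zeroA (@snd_hom A B)).
by case: (z _).
Qed.

Lemma prod_inV (A B : algebra S) : inV A -> inV B -> inV (prodAlg A B).
Proof.
move=> HA HB s t st v.
rewrite [eval v s]surjective_pairing [eval v t]surjective_pairing.
rewrite !(eval_hom _ _ (@fst_hom A B)) !(eval_hom _ _ (@snd_hom A B)).
by rewrite (HA s t) ?(HB s t).
Qed.

(* The pair [(a, b)] stands for the formal difference [a - b]. *)
Definition grel (A : algebra S) (x y : A * A) : Prop :=
  exists k, x.1 \+ y.2 \+ k = y.1 \+ x.2 \+ k.

Lemma grel_refl (A : algebra S) (x : A * A) : grel x x.
Proof. by exists (z A). Qed.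

Lemma grel_sym (A : algebra S) (x y : A * A) : grel x y -> grel y x.
Proof. by case=> k xy; exists k. Qed.

Lemma grel_hom (A B : algebra S) (f : A -> B) (x y : A * A) : is_hom f ->
  grel x y -> grel (f x.1, f x.2) (f y.1, f y.2).
Proof. by move=> f_hom [k xy]; exists (f k); rewrite /= -!hom_plusA // xy. Qed.

Lemma hom_Inv (A B : algebra S) (f : A -> B) (x : A) :
  is_hom f -> Inv x -> Inv (f x).
Proof.
by move=> f_hom [y [xy yx]]; exists (f y); rewrite -!hom_plusA // xy yx hom_zeroA.
Qed.

Hypothesis Hent : entropic V.
Hypothesis HJT : jonsson_tarski zero plus.

Section AlgebraInV.
Variable A : algebra S.
Hypothesis HA : inV A.

Lemma interp_eval X o (v : 'I_(arity o) -> X -> A) t :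
  interp A o (fun i => eval (v i) t) = eval (fun x => interp A o (v^~ x)) t.
Proof.
elim: t => [x|o' args IH] //=; rewrite (@Hent A HA o o').
by congr (interp A o'); apply: functional_extensionality.
Qed.

Lemma eval_eval X Y (w : X -> Y -> A) s t :
  eval (fun x => eval (w x) t) s = eval (fun y => eval (w^~ y) s) t.
Proof.
elim: s => [x|o args IH] //=; rewrite -interp_eval.
by congr (interp A o); apply: functional_extensionality.
Qed.

Lemma interp_plusA o (x y : 'I_(arity o) -> A) :
  interp A o (fun i => x i \+ y i) = interp A o x \+ interp A o y.
Proof. by rewrite /plusA interp_eval; apply: eval_ext; case. Qed.

Lemma interp_zeroA o : interp A o (fun _ => z A) = z A.
Proof. by rewrite /zeroA interp_eval; apply: eval_ext; case. Qed.

(* [+] is a derived operation, so entropicity makes it commute with itself. *)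
Lemma addjACA (a b c d : A) : (a \+ b) \+ (c \+ d) = (a \+ c) \+ (b \+ d).
Proof.
pose w (x y : bool) := if x then if y then a else b else if y then c else d.
transitivity (eval (fun x => eval (w x) plus) plus); first by apply: eval_ext; case.
by rewrite eval_eval; apply: eval_ext; case; apply: eval_ext; case.
Qed.

Lemma add0j (x : A) : z A \+ x = x. Proof. by case: (HJT HA x). Qed.
Lemma addj0 (x : A) : x \+ z A = x. Proof. by case: (HJT HA x). Qed.

Lemma addjC (a b : A) : a \+ b = b \+ a.
Proof. by rewrite -[a in LHS]add0j -[b in LHS]addj0 addjACA add0j addj0. Qed.

Lemma addjA (a b c : A) : a \+ b \+ c = a \+ (b \+ c).
Proof. by rewrite -[c in LHS]add0j addjACA addj0. Qed.

Lemma addjAC (a b c : A) : a \+ b \+ c = a \+ c \+ b.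
Proof. by rewrite addjA (addjC b) -addjA. Qed.

Lemma Inv_interp o (args : 'I_(arity o) -> A) :
  (forall i, Inv (args i)) -> Inv (interp A o args).
Proof.
case/choice=> y Hy; exists (interp A o y); rewrite -!interp_plusA.
by split; rewrite -[RHS](interp_zeroA o); congr (interp A o);
  apply: functional_extensionality => i; case: (Hy i).
Qed.

Lemma grel_trans (x y w : A * A) : grel x y -> grel y w -> grel x w.
Proof.
case: x y w => [a b] [c d] [e f] [k H1] [l H2] /=.
exists (d \+ (k \+ l)).
transitivity (a \+ d \+ k \+ (f \+ l)).
  by rewrite (addjACA (a \+ d)) (addjAC a d f) (addjA (a \+ f)).
rewrite H1; transitivity (c \+ f \+ l \+ (b \+ k)).
  by rewrite (addjACA (c \+ b)) (addjAC c b f) (addjC k l) (addjACA (c \+ f)).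
by rewrite H2 (addjACA (e \+ d)) (addjAC e d b) (addjA (e \+ b)) (addjC l k).
Qed.

Lemma grel_interp o (x y : 'I_(arity o) -> A * A) :
  (forall i, grel (x i) (y i)) ->
  grel (interp (prodAlg A A) o x) (interp (prodAlg A A) o y).
Proof.
case/choice=> k Hk; exists (interp A o k); rewrite /= -!interp_plusA.
by congr (interp A o); apply: functional_extensionality.
Qed.

End AlgebraInV.

Definition InvAlg (A : algebra S) (HA : inV A) : algebra S :=
  @Algebra S {x : A | Inv x}
    (fun o args => exist _ (interp A o (@proj1_sig _ _ \o args))
                     (Inv_interp HA (fun i => proj2_sig (args i)))).

Lemma InvAlg_val_hom (A : algebra S) (HA : inV A) :
  is_hom (fun x : InvAlg HA => proj1_sig x).
Proof. by []. Qed.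

Lemma InvAlg_inV (A : algebra S) (HA : inV A) : inV (InvAlg HA).
Proof.
move=> s t st v; apply: proj1_sig_inj.
by rewrite !(eval_hom _ _ (@InvAlg_val_hom A HA)) (HA s t).
Qed.

Lemma tensor_abelian (A B T : algebra S) (t : A -> B -> T) :
  inVAb A -> inVAb B -> is_tensor t -> abelian T.
Proof.
move=> [_ AbA] [_ AbB] [HT [[t_homr t_homl] t_univ]].
pose tInv a b : InvAlg HT := exist _ (t a b) (hom_Inv (t_homr a) (AbB b)).
have tInv_bi : bimorphism tInv.
  by split=> [a|b] o args; apply: proj1_sig_inj; [exact: t_homr | exact: t_homl].
have [[h [h_hom htInv]] _] := t_univ _ tInv (@InvAlg_inV T HT) tInv_bi.
have [_ t_uniq] := t_univ _ t HT (conj t_homr t_homl).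
have valhK x : proj1_sig (h x) = x.
  apply: (t_uniq (fun x => proj1_sig (h x)) id) => //.
  - by move=> o args /=; rewrite h_hom.
  - by move=> a b; rewrite htInv.
by move=> x; rewrite -(valhK x); apply: proj2_sig.
Qed.

Section AbelianAlgebra.
Variable B : algebra S.
Hypotheses (HB : inV B) (AbB : abelian B).

Definition oppj (y : B) : B :=
  proj1_sig (constructive_indefinite_description _ (AbB y)).

Lemma addjN y : y \+ oppj y = z B.
Proof. exact: (proj2_sig (constructive_indefinite_description _ (AbB y))).1. Qed.

Lemma oppj_unique (x y : B) : x \+ y = z B -> y = oppj x.
Proof.
by move=> xy; rewrite -[oppj x](add0j HB) -xy (addjAC HB) addjN (add0j HB).
Qed.

Lemma addjIr (k a b : B) : a \+ k = b \+ k -> a = b.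
Proof.
by move=> akb; rewrite -[a](addj0 HB) -[b](addj0 HB) -(addjN k) -!(addjA HB) akb.
Qed.

Lemma oppj0 : oppj (z B) = z B.
Proof. exact/esym/oppj_unique/addj0. Qed.

Lemma grel_subj (a b c d : B) : grel (a, b) (c, d) -> a \+ oppj b = c \+ oppj d.
Proof.
case=> k /addjIr /= acbd.
rewrite -[LHS](addj0 HB) -(addjN d) (addjACA HB) acbd (addjC HB (oppj b)).
by rewrite (addjACA HB) addjN (addj0 HB).
Qed.

Lemma oppj_interp o (y : 'I_(arity o) -> B) :
  oppj (interp B o y) = interp B o (oppj \o y).
Proof.
symmetry; apply: oppj_unique; rewrite -(interp_plusA HB) -[RHS](interp_zeroA HB o).
by congr (interp B o); apply: functional_extensionality => i; apply: addjN.
Qed.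

End AbelianAlgebra.

Section Grothendieck.
Variable A : algebra S.
Hypothesis HA : inV A.
Local Notation AA := (prodAlg A A).
Local Notation cls := (@qclass (A * A) (@grel A)).
Local Notation rep := (@qrepr (A * A) (@grel A)).

Definition GrothAlg : algebra S :=
  @Algebra S (quot (@grel A)) (fun o qs => cls (interp AA o (rep \o qs))).

Lemma groth_class_hom : is_hom (cls : AA -> GrothAlg).
Proof.
move=> o args; apply: qclass_eq; [exact: grel_sym | exact: grel_trans |].
by apply: grel_interp => // i; apply: qrepr_rel; apply: grel_refl.
Qed.

Lemma GrothAlg_inV : inV GrothAlg.
Proof.
move=> s t st v.
have -> : v = cls \o (rep \o v) by apply: functional_extensionality => n; rewrite /= qreprK.
by rewrite -!(eval_hom _ _ groth_class_hom) (prod_inV HA HA st).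
Qed.

Lemma groth_plusA (x y : A * A) :
  (cls x : GrothAlg) \+ cls y = cls (x.1 \+ y.1, x.2 \+ y.2).
Proof. by rewrite -(hom_plusA _ _ groth_class_hom) prod_plusA. Qed.

Lemma groth_zeroA : z GrothAlg = cls (z A, z A).
Proof. by rewrite -(hom_zeroA groth_class_hom) prod_zeroA. Qed.

Lemma groth_class_eq (x y : A * A) :
  x.1 \+ y.2 = y.1 \+ x.2 -> cls x = cls y.
Proof.
move=> xy; apply: qclass_eq; [exact: grel_sym | exact: grel_trans |].
by exists (z A); rewrite xy.
Qed.

Lemma GrothAlg_abelian : abelian GrothAlg.
Proof.
move=> q; have [[a b] ->] := qclass_surj q.
exists (cls (b, a)); rewrite !groth_plusA groth_zeroA.
by split; apply: groth_class_eq; rewrite /= !(addj0 HA) !(add0j HA) addjC.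
Qed.

Definition groth_eta (a : A) : GrothAlg := cls (a, z A).

Lemma groth_eta_hom : is_hom groth_eta.
Proof. by move=> o args; rewrite /groth_eta -groth_class_hom /= interp_zeroA. Qed.

Section Lift.
Variable B : algebra S.
Hypotheses (HB : inV B) (AbB : abelian B).
Variable f : A -> B.
Hypothesis f_hom : is_hom f.

Definition groth_lift (q : GrothAlg) : B := f (rep q).1 \+ oppj AbB (f (rep q).2).

Lemma groth_lift_class x : groth_lift (cls x) = f x.1 \+ oppj AbB (f x.2).
Proof.
symmetry; apply: grel_subj => //; apply: grel_hom => //.
by apply: qrepr_rel; apply: grel_refl.
Qed.

Lemma groth_lift_hom : is_hom groth_lift.
Proof.
by move=> o qs; rewrite groth_lift_class /= !f_hom (oppj_interp HB) -(interp_plusA HB).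
Qed.

Lemma groth_lift_eta a : groth_lift (groth_eta a) = f a.
Proof.
by rewrite groth_lift_class /= hom_zeroA // (oppj0 HB) (addj0 HB).
Qed.

Lemma groth_lift_unique (h : GrothAlg -> B) :
  is_hom h -> (forall a, h (groth_eta a) = f a) -> h =1 groth_lift.
Proof.
move=> h_hom h_eta q; have [[a b] ->] := qclass_surj q.
have split_ab : cls (a, b) = groth_eta a \+ cls (z A, b).
  by rewrite groth_plusA /= (addj0 HA) (add0j HA).
rewrite groth_lift_class split_ab hom_plusA // h_eta; congr (_ \+ _).
apply: (oppj_unique HB) => /=.
rewrite -h_eta -hom_plusA // groth_plusA /= -(hom_zeroA h_hom) groth_zeroA.
by congr h; apply: groth_class_eq; rewrite /= !(addj0 HA) !(add0j HA).
Qed.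

End Lift.

Lemma groth_reflection : reflection zero plus groth_eta.
Proof.
split; first by split; [exact: GrothAlg_inV | exact: GrothAlg_abelian].
split=> [|B f [HB AbB] f_hom]; first exact: groth_eta_hom.
split.
  by exists (groth_lift AbB f); split; [exact: groth_lift_hom | exact: groth_lift_eta].
move=> h1 h2 h1_hom h2_hom h1_eta h2_eta q.
rewrite (groth_lift_unique HB AbB f_hom h1_hom h1_eta).
by rewrite (groth_lift_unique HB AbB f_hom h2_hom h2_eta).
Qed.

End Grothendieck.

Lemma is_tensor_in_sub (P Q : algebra S -> Prop) (A B T : algebra S) (t : A -> B -> T) :
  (forall C, Q C -> P C) -> Q T -> is_tensor_in P t -> is_tensor_in Q t.
Proof. by move=> QP QT [_ [t_bi t_univ]]; split=> //; split=> // C f /QP; apply: t_univ. Qed.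

Lemma tensor_comparison (A B TV TA : algebra S) (tv : A -> B -> TV) (ta : A -> B -> TA) :
  is_tensor tv -> is_tensorAb zero plus ta ->
  exists m : TV -> TA, is_hom m /\ forall a b, m (tv a b) = ta a b.
Proof. by move=> [_ [_ tv_univ]] [[HTA _] [ta_bi _]]; apply: (tv_univ _ _ HTA ta_bi).1. Qed.

Lemma tensor_comparison_family (tensV tensA : algebra S -> algebra S -> algebra S)
    (tv : forall A B : algebra S, A -> B -> tensV A B)
    (ta : forall A B : algebra S, A -> B -> tensA A B) :
  (forall A B, inV A -> inV B -> is_tensor (tv A B)) ->
  (forall A B, inVAb A -> inVAb B -> is_tensorAb zero plus (ta A B)) ->
  exists mu : forall A B, tensV A B -> tensA A B,
    forall A B, inVAb A -> inVAb B ->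
      is_hom (mu A B) /\ forall a b, mu A B (tv A B a b) = ta A B a b.
Proof.
move=> HtV HtA.
have mu_ex A B : exists m : tensV A B -> tensA A B, inVAb A -> inVAb B ->
    is_hom m /\ forall a b, m (tv A B a b) = ta A B a b.
  case: (classic (inVAb A /\ inVAb B)) => [[HA HB] | notAb].
    by have [m m_spec] := tensor_comparison (HtV A B HA.1 HB.1) (HtA A B HA HB); exists m.
  (* Outside V_Ab the components of [mu] are arbitrary. *)
  by exists (fun=> z _) => HA HB; case: notAb.
exists (fun A B => proj1_sig (constructive_indefinite_description _ (mu_ex A B))).
by move=> A B; apply: (proj2_sig (constructive_indefinite_description _ (mu_ex A B))).
Qed.

Lemma reflection_free_on_one (F R : algebra S) (g : F) (eta : F -> R) :
  free_on_one g -> reflection zero plus eta -> free_on_oneAb zero plus (eta g).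
Proof.
move=> [HF F_univ] [HR [eta_hom R_univ]]; split=> // B b [HB AbB].
have [[f [f_hom fg]] F_uniq] := F_univ B b HB.
split.
  have [[h [h_hom h_eta]] _] := R_univ B f (conj HB AbB) f_hom.
  by exists h; rewrite h_eta.
move=> h1 h2 h1_hom h2_hom h1g h2g.
have [_ R_uniq] := R_univ B (h1 \o eta) (conj HB AbB) (hom_comp eta_hom h1_hom).
apply: R_uniq => // a; apply: (F_uniq (h2 \o eta) (h1 \o eta)) => //;
  exact: hom_comp.
Qed.

End EntropicJonssonTarski.

Theorem proposition1p6 (V : variety) (zero : term (vsig V) Empty_set)
  (plus : term (vsig V) bool)
  (Hent : entropic V) (HJT : jonsson_tarski zero plus) :
  (* (1) V_Ab is reflective (fullness is by definition: same homomorphisms)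
         and isomorphism-closed *)
  ((forall A : algebra (vsig V), inV A ->
      exists (R : algebra (vsig V)) (eta : A -> R), reflection zero plus eta)
   /\
   (forall (A B : algebra (vsig V)) (f : A -> B) (k : B -> A),
      inVAb zero plus A -> inV B -> is_hom f -> is_hom k ->
      (forall a, k (f a) = a) -> (forall b, f (k b) = b) ->
      inVAb zero plus B))
  /\
  (* (2) Inv(A) is a subalgebra lying in V_Ab, and Inv is right adjoint to the
         embedding (the inclusion Inv(A) -> A is couniversal among maps from
         V_Ab); Inv restricted to V_Ab is the identity *)
  (forall A : algebra (vsig V), inV A ->
     (forall (o : op_sym (vsig V)) (args : 'I_(arity o) -> A),
        (forall i, Inv zero plus (args i)) -> Inv zero plus (interp A o args))
     /\ (forall x : A, Inv zero plus x ->
           exists y : A, plusA plus x y = zeroA zero A /\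
                         plusA plus y x = zeroA zero A /\ Inv zero plus y)
     /\ (forall (B : algebra (vsig V)) (f : B -> A),
           inVAb zero plus B -> is_hom f -> forall b, Inv zero plus (f b))
     /\ (abelian zero plus A -> forall x : A, Inv zero plus x))
  /\
  (* (3) V_Ab is closed under the entropic tensor product of V, which is then
         also the tensor product of V_Ab; the unit of V_Ab is R F1 *)
  ((forall (A B T : algebra (vsig V)) (t : A -> B -> T),
      inVAb zero plus A -> inVAb zero plus B -> is_tensor t ->
      inVAb zero plus T /\ is_tensorAb zero plus t)
   /\
   (forall (F : algebra (vsig V)) (g : F), free_on_one g ->
      forall (R : algebra (vsig V)) (eta : F -> R), reflection zero plus eta ->
      free_on_oneAb zero plus (eta g)))
  /\
  (* (4) the embedding V_Ab -> V is a (lax) symmetric monoidal functor, for any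
         choice of the tensor products and units of V and of V_Ab *)
  (forall (tensV : algebra (vsig V) -> algebra (vsig V) -> algebra (vsig V))
          (tv : forall A B : algebra (vsig V), A -> B -> tensV A B)
          (HtV : forall A B : algebra (vsig V), inV A -> inV B -> is_tensor (tv A B))
          (tensA : algebra (vsig V) -> algebra (vsig V) -> algebra (vsig V))
          (ta : forall A B : algebra (vsig V), A -> B -> tensA A B)
          (HtA : forall A B : algebra (vsig V), inVAb zero plus A -> inVAb zero plus B ->
                   is_tensorAb zero plus (ta A B))
          (I : algebra (vsig V)) (g : I) (HI : free_on_one g)
          (J : algebra (vsig V)) (h : J) (HJ : free_on_oneAb zero plus h),
   exists (mu : forall A B : algebra (vsig V), tensV A B -> tensA A B) (eps : I -> J),
     is_hom eps
     /\ (forall A B : algebra (vsig V), inVAb zero plus A -> inVAb zero plus B -> is_hom (mu A B))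
     (* naturality of mu *)
     /\ (forall (A A' B B' : algebra (vsig V)) (f : A -> A') (k : B -> B'),
           inVAb zero plus A -> inVAb zero plus A' ->
           inVAb zero plus B -> inVAb zero plus B' ->
           is_hom f -> is_hom k ->
           forall phi : tensA A B -> tensA A' B', is_hom phi ->
             (forall a b, phi (ta A B a b) = ta A' B' (f a) (k b)) ->
             forall a b, phi (mu A B (tv A B a b)) =
                         mu A' B' (tv A' B' (f a) (k b)))
     (* associativity coherence *)
     /\ (forall A B C : algebra (vsig V), inVAb zero plus A -> inVAb zero plus B -> inVAb zero plus C ->
           forall alpha : tensA (tensA A B) C -> tensA A (tensA B C), is_hom alpha ->
             (forall a b c, alpha (ta _ C (ta A B a b) c) = ta A _ a (ta B C b c)) ->
             forall a b c,
               alpha (mu (tensA A B) C (tv _ C (mu A B (tv A B a b)) c)) =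
               mu A (tensA B C) (tv A _ a (mu B C (tv B C b c))))
     (* left unit coherence *)
     /\ (forall A : algebra (vsig V), inVAb zero plus A ->
           forall l : tensA J A -> A, is_hom l -> (forall a, l (ta J A h a) = a) ->
             forall a, l (mu J A (tv J A (eps g) a)) = a)
     (* right unit coherence *)
     /\ (forall A : algebra (vsig V), inVAb zero plus A ->
           forall r : tensA A J -> A, is_hom r -> (forall a, r (ta A J a h) = a) ->
             forall a, r (mu A J (tv A J a (eps g))) = a)
     (* symmetry coherence *)
     /\ (forall A B : algebra (vsig V), inVAb zero plus A -> inVAb zero plus B ->
           forall s : tensA A B -> tensA B A, is_hom s ->
             (forall a b, s (ta A B a b) = ta B A b a) ->
             forall a b, s (mu A B (tv A B a b)) = mu B A (tv B A b a))).
Proof.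
split; [split | split; [| split; [split |]]].
- by move=> A HA; do 2 eexists; apply: groth_reflection HA.
- move=> A B f k [_ AbA] HB f_hom _ _ fk; split=> // b.
  by rewrite -(fk b); apply: hom_Inv f_hom (AbA _).
- move=> A HA; split; first by move=> o; apply: Inv_interp.
  split; first by move=> x [y [xy yx]]; exists y; do !split=> //; exists x.
  by split=> // B f [_ AbB] f_hom b; apply: hom_Inv f_hom (AbB b).
- move=> A B T t HA HB Ht.
  have HTab : inVAb zero plus T by split; [case: Ht | apply: tensor_abelian Ht].
  by split=> //; apply: is_tensor_in_sub Ht => // C [].
- by move=> F g Hg R eta; apply: reflection_free_on_one.
- move=> tensV tv HtV tensA ta HtA I g HI J h [HJab _].
  have [mu mu_spec] := tensor_comparison_family HtV HtA.
  have mu_tv A B (HA : inVAb zero plus A) (HB : inVAb zero plus B) := (mu_spec A B HA HB).2.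
  have [[eps [eps_hom eps_g]] _] := HI.2 J h HJab.1.
  exists mu, eps; split=> //.
  split; first by move=> A B HA HB; case: (mu_spec A B HA HB).
  split; first by move=> A A' B B' f k HA HA' HB HB' _ _ phi _ phi_ta a b;
    rewrite (mu_tv A B HA HB) (mu_tv A' B' HA' HB').
  split.
    move=> A B C HA HB HC alpha _ alpha_ta a b c.
    have HAB := (HtA A B HA HB).1; have HBC := (HtA B C HB HC).1.
    by rewrite (mu_tv A B HA HB) (mu_tv B C HB HC) (mu_tv _ C HAB HC) (mu_tv A _ HA HBC).
  split; first by move=> A HA l _ l_ta a; rewrite eps_g (mu_tv J A HJab HA).
  split; first by move=> A HA r _ r_ta a; rewrite eps_g (mu_tv A J HA HJab).
  by move=> A B HA HB s _ s_ta a b; rewrite (mu_tv A B HA HB) (mu_tv B A HB HA).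
Qed.
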